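(* Let $n\ge1$, let $\mathcal{S}$ be a discrete subgroup of $O(n+1)$ satisfying the spanning property, and let $f$ be an $\mathcal{S}$-invariant function on $\mathbb{S}^n$ with $c_1\le f\le c_2$ for positive constants $c_1,c_2$. For $p<-n-1$ let $h^{(p)}$ be the $\mathcal{S}$-invariant solution of $\det(\nabla^2h+hI)=fh^{p-1}$ on $\mathbb{S}^n$ that maximizes $V$ over $\mathcal{K}_p(\mathcal{S})$. Then $$\lim_{p\to-\infty}\min_{\mathbb{S}^n}h^{(p)}=1.$$
   Context: $\mathcal{K}_p(\mathcal{S})=\{\Omega\in\mathcal{K}_0(\mathcal{S}):\int_{\mathbb{S}^n}fh_\Omega^p=\int_{\mathbb{S}^n}f\}$, $\mathcal{K}_0(\mathcal{S})$ the $\mathcal{S}$-invariant convex bodies in $\mathbb{R}^{n+1}$ containing the origin, $h_\Omega$ the support function, $V(\Omega)=(n+1)|\Omega|$. Spanning property: for every $a\in\mathbb{S}^n$, $\mathrm{conv}\{\phi(a):\phi\in\mathcal{S}\}$ is a non-degenerate $(n+1)$-dimensional polytope. *)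

(* R : realType, points of R^(k) are row
   vectors 'rV[R]_k, linear maps are matrices acting by phi(x) := x *m phi^T. *)
From HB Require Import structures.
From mathcomp Require Import all_boot all_order all_algebra.
From mathcomp Require Import all_classical all_reals all_analysis.
Set Implicit Arguments.
Unset Strict Implicit.
Unset Printing Implicit Defensive.
Import Order.TTheory GRing.Theory Num.Theory.
Import numFieldNormedType.Exports.
Local Open Scope classical_set_scope.
Local Open Scope ring_scope.

Section Defs.
Variable R : realType.

Definition dotv k (x y : 'rV[R]_k) : R := \sum_(i < k) x 0 i * y 0 i.
Definition enorm k (x : 'rV[R]_k) : R := Num.sqrt (dotv x x).
Definition sphere k : set 'rV[R]_k := [set x | enorm x = 1].

Definition mact k (phi : 'M[R]_k) (x : 'rV[R]_k) : 'rV[R]_k := x *m phi^T.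

Definition is_orthogonal k (phi : 'M[R]_k) : Prop := phi *m phi^T = 1%:M.

(* S is a discrete subgroup of O(k): a subgroup of the orthogonal group all of
   whose elements are isolated points (for the topology of entrywise convergence) *)
Definition discrete_subgroup_O k (S : set 'M[R]_k) : Prop :=
  [/\ S 1%:M,
      (forall a b, S a -> S b -> S (a *m b)),
      (forall a, S a -> S (invmx a)),
      (forall a, S a -> is_orthogonal a) &
      (forall a, S a -> exists2 e : R, 0 < e &
         forall b, S b -> (forall i j, `|b i j - a i j| < e) -> b = a)].

Definition convhull k (A : set 'rV[R]_k) : set 'rV[R]_k :=
  [set x | exists m (w : 'I_m -> R) (pts : 'I_m -> 'rV[R]_k),
     [/\ forall i, 0 <= w i, \sum_(i < m) w i = 1,
         forall i, A (pts i) & x = \sum_(i < m) w i *: pts i]].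

(* spanning property: each orbit S.a (a on the sphere) has as convex hull a
   non-degenerate k-dimensional polytope (finite point set, nonempty interior) *)
Definition spanning k (S : set 'M[R]_k) : Prop :=
  forall a, sphere a ->
    finite_set [set mact phi a | phi in S] /\
    exists x, interior (convhull [set mact phi a | phi in S]) x.

Definition is_convex k (K : set 'rV[R]_k) : Prop :=
  forall x y (t : R), K x -> K y -> 0 <= t <= 1 -> K (t *: x + (1 - t) *: y).

Definition convex_body k (K : set 'rV[R]_k) : Prop :=
  [/\ compact K, is_convex K & exists x, interior K x].

Definition S_invariant_set k (S : set 'M[R]_k) (K : set 'rV[R]_k) : Prop :=
  forall phi, S phi -> [set mact phi x | x in K] = K.

Definition supp_h k (K : set 'rV[R]_k) (x : 'rV[R]_k) : R :=
  sup [set dotv x y | y in K].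

(* iterated Lebesgue integral of a nonnegative extended-real function on R^k
   (by Tonelli this is the integral against Lebesgue measure on R^k) *)
Fixpoint iint (k : nat) : ('rV[R]_k -> \bar R) -> \bar R :=
  match k return ('rV[R]_k -> \bar R) -> \bar R with
  | 0 => fun g => g 0
  | k'.+1 => fun g => (\int[@lebesgue_measure R]_t
                 iint (fun y : 'rV[R]_k' => g (row_mx (const_mx t : 'rV[R]_1) y)))%E
  end.

Definition lebvol k (K : set 'rV[R]_k) : \bar R := iint (fun x => (\1_K x)%:E).
Definition Vol k (K : set 'rV[R]_k) : \bar R := (k%:R%:E * lebvol K)%E.

(* integral over the unit sphere S^(k-1) w.r.t. its standard surface measure,
   via polar coordinates:  int_{S} g dsigma = k * int_{0<|x|<=1} g(x/|x|) dx *)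
Definition sph_int k (g : 'rV[R]_k -> \bar R) : \bar R :=
  (k%:R%:E * iint (fun x => if ((x != 0 :> 'rV[R]_k) && (enorm x <= 1))%R
                           then g ((enorm x)^-1 *: x) else 0%E))%E.

(* a^p for a >= 0 and p < 0, with the convention 0^p = +oo *)
Definition powe (a p : R) : \bar R := if 0 < a then (a `^ p)%:E else +oo%E.

Definition Kp k (S : set 'M[R]_k) (f : 'rV[R]_k -> R) (p : R)
    (K : set 'rV[R]_k) : Prop :=
  [/\ convex_body K, S_invariant_set S K, K 0 &
      sph_int (fun x => ((f x)%:E * powe (supp_h K x) p)%E)
      = sph_int (fun x => (f x)%:E)].

Definition V_maximizer k (S : set 'M[R]_k) (f : 'rV[R]_k -> R) (p : R)
    (K : set 'rV[R]_k) : Prop :=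
  Kp S f p K /\ forall L, Kp S f p L -> (Vol L <= Vol K)%E.

(* minimum of h over the sphere (attained for continuous h) *)
Definition sph_min k (h : 'rV[R]_k -> R) : R := inf [set h x | x in @sphere k].

Definition S_invariant_fun k (S : set 'M[R]_k) (f : 'rV[R]_k -> R) : Prop :=
  forall phi x, S phi -> sphere x -> f (mact phi x) = f x.

Definition rv_of_tuple k (t : k.-tuple R) : 'rV[R]_k := \row_i tnth t i.

Definition sphere_measurable k (f : 'rV[R]_k -> R) : Prop :=
  measurable_fun [set t : k.-tuple R | sphere (rv_of_tuple t)]
                 (fun t => f (rv_of_tuple t)).

End Defs.

(* For p < 0 the normalisation int f h^p = int f forces min h <= 1: if h >= c > 1
   on the sphere, then int f h^p <= c^p int f < int f.  The spanning property gives a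
   uniform rho > 0 such that for all unit vectors a and x some phi in S has
   x . phi(a) >= rho; so a point y of an S-invariant body Omega yields
   h_Omega >= rho |y| everywhere, whence Omega lies in the ball of radius 1/rho and
   h_Omega is (1/rho)-Lipschitz.  If min h <= 1 - 2 eps, then h <= 1 - eps on a cap
   of radius eps rho / 2, whose measure is bounded below independently of p, and
   int f h^p >= c1 (1 - eps)^p |cap| exceeds int f once p is negative enough. *)

From Pilot Require Import Defs.
From HB Require Import structures.
From mathcomp Require Import all_boot all_order all_algebra.
From mathcomp Require Import all_classical all_reals all_analysis.
From mathcomp Require Import finmap ring lra.
Set Implicit Arguments.
Unset Strict Implicit.
Unset Printing Implicit Defensive.
Import Order.TTheory GRing.Theory Num.Theory.
Import numFieldNormedType.Exports.
Local Open Scope classical_set_scope.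
Local Open Scope ring_scope.

Section Euclid.
Variables (R : realType) (k : nat).
Implicit Types x y z : 'rV[R]_k.

Lemma dotvC x y : dotv x y = dotv y x.
Proof. by apply: eq_bigr => i _; rewrite mulrC. Qed.

Lemma dotvDr x y z : dotv x (y + z) = dotv x y + dotv x z.
Proof. by rewrite /dotv -big_split; apply: eq_bigr => i _; rewrite mxE mulrDr. Qed.

Lemma dotvDl x y z : dotv (y + z) x = dotv y x + dotv z x.
Proof. by rewrite dotvC dotvDr !(dotvC x). Qed.

Lemma dotvZr (c : R) x y : dotv x (c *: y) = c * dotv x y.
Proof. by rewrite /dotv mulr_sumr; apply: eq_bigr => i _; rewrite mxE mulrCA. Qed.

Lemma dotvZl (c : R) x y : dotv (c *: x) y = c * dotv x y.
Proof. by rewrite dotvC dotvZr dotvC. Qed.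

Lemma dotvNr x y : dotv x (- y) = - dotv x y.
Proof. by rewrite -scaleN1r dotvZr mulN1r. Qed.

Lemma dotvBr x y z : dotv x (y - z) = dotv x y - dotv x z.
Proof. by rewrite dotvDr dotvNr. Qed.

Lemma dotvBl x y z : dotv (y - z) x = dotv y x - dotv z x.
Proof. by rewrite dotvC dotvBr !(dotvC x). Qed.

Lemma dotv0r x : dotv x 0 = 0.
Proof. by rewrite /dotv big1 // => i _; rewrite mxE mulr0. Qed.

Lemma dotv_sumr x m (w : 'I_m -> R) (pts : 'I_m -> 'rV[R]_k) :
  dotv x (\sum_(i < m) w i *: pts i) = \sum_(i < m) w i * dotv x (pts i).
Proof.
elim: m w pts => [|m IH] w pts; first by rewrite !big_ord0 dotv0r.
by rewrite !big_ord_recr /= dotvDr IH dotvZr.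
Qed.

Lemma dotv_ge0 x : 0 <= dotv x x.
Proof. by apply: sumr_ge0 => i _; rewrite -expr2 sqr_ge0. Qed.

Lemma dotv_eq0 x : dotv x x = 0 -> x = 0.
Proof.
move=> /eqP; rewrite psumr_eq0; last by move=> i _; rewrite -expr2 sqr_ge0.
move=> /allP x0; apply/rowP => i; rewrite mxE.
by have := x0 i (mem_index_enum i); rewrite /= -expr2 sqrf_eq0 => /eqP.
Qed.

Lemma sqr_coord_le_dotv x i : x 0 i ^+ 2 <= dotv x x.
Proof.
rewrite /dotv (bigD1 i) //= -expr2 lerDl; apply: sumr_ge0 => j _.
by rewrite -expr2 sqr_ge0.
Qed.

Lemma dotv_CauchySchwarz x y : dotv x y ^+ 2 <= dotv x x * dotv y y.
Proof.
have [y0|yn0] := eqVneq (dotv y y) 0.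
  by rewrite (dotv_eq0 y0) !dotv0r expr2 !mulr0.
have ypos : 0 < dotv y y by rewrite lt_neqAle eq_sym yn0 dotv_ge0.
set t := dotv x y / dotv y y.
have := dotv_ge0 (x - t *: y).
rewrite dotvBl !dotvBr !dotvZl !dotvZr (dotvC y x).
have -> : dotv x x - t * dotv x y - (t * dotv x y - t * (t * dotv y y))
   = dotv x x - dotv x y ^+ 2 / dotv y y by rewrite /t; field.
by rewrite subr_ge0 ler_pdivrMr // mulrC.
Qed.

Lemma enorm_ge0 x : 0 <= enorm x.
Proof. exact: sqrtr_ge0. Qed.

Lemma enorm_sqr x : enorm x ^+ 2 = dotv x x.
Proof. by rewrite sqr_sqrtr // dotv_ge0. Qed.

Lemma enorm0 : enorm (0 : 'rV[R]_k) = 0.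
Proof. by rewrite /enorm dotv0r sqrtr0. Qed.

Lemma enorm_eq0 x : enorm x = 0 -> x = 0.
Proof. by move=> x0; apply: dotv_eq0; rewrite -enorm_sqr x0 expr0n. Qed.

Lemma enorm_gt0 x : x != 0 -> 0 < enorm x.
Proof.
move=> xn0; rewrite lt_neqAle enorm_ge0 andbT; apply/eqP => /esym /enorm_eq0 x0.
by rewrite x0 eqxx in xn0.
Qed.

Lemma dotv_le_enorm x y : dotv x y <= enorm x * enorm y.
Proof.
apply: le_trans (ler_norm _) _.
rewrite -(ler_pXn2r (_ : 0 < 2)%N) ?nnegrE ?mulr_ge0 ?enorm_ge0 //.
by rewrite real_normK ?num_real // exprMn !enorm_sqr dotv_CauchySchwarz.
Qed.

Lemma enormZ (c : R) x : enorm (c *: x) = `|c| * enorm x.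
Proof.
by rewrite /enorm dotvZl dotvZr mulrA -expr2 sqrtrM ?sqr_ge0 // sqrtr_sqr.
Qed.

Lemma enormN x : enorm (- x) = enorm x.
Proof. by rewrite -scaleN1r enormZ normrN normr1 mul1r. Qed.

Lemma enormD_le x y : enorm (x + y) <= enorm x + enorm y.
Proof.
rewrite -(ler_pXn2r (_ : 0 < 2)%N) ?nnegrE ?addr_ge0 ?enorm_ge0 //.
rewrite enorm_sqr dotvDl !dotvDr (dotvC y x) sqrrD !enorm_sqr.
have := dotv_le_enorm x y; lra.
Qed.

Lemma lerB_enorm x y : enorm x - enorm y <= enorm (x - y).
Proof. by have := enormD_le (x - y) y; rewrite subrK; lra. Qed.

Lemma enorm_dist_le x y : `|enorm x - enorm y| <= enorm (x - y).
Proof.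
rewrite ler_norml lerB_enorm andbT.
by have := lerB_enorm y x; rewrite -(opprB x y) enormN; lra.
Qed.

Lemma coord_le_enorm x i : `|x 0 i| <= enorm x.
Proof.
rewrite -(ler_pXn2r (_ : 0 < 2)%N) ?nnegrE ?enorm_ge0 //.
by rewrite real_normK ?num_real // enorm_sqr sqr_coord_le_dotv.
Qed.

Lemma enorm_le_coord_bound x (c : R) : 0 <= c -> (forall i, `|x 0 i| <= c) ->
  enorm x <= k%:R * c.
Proof.
move=> c0 xc.
have dotv_le : dotv x x <= k%:R * c ^+ 2.
  have : dotv x x <= \sum_(i < k) c ^+ 2.
    apply: ler_sum => i _; rewrite -expr2 -real_normK ?num_real //.
    by rewrite lerXn2r ?nnegrE ?normr_ge0.
  by rewrite sumr_const card_ord mulr_natl.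
rewrite -(ler_pXn2r (_ : 0 < 2)%N) ?nnegrE ?enorm_ge0 ?mulr_ge0 // enorm_sqr.
apply: (le_trans dotv_le); rewrite exprMn expr2 -mulrA.
case: k x xc dotv_le => [|k'] _ _ _; first by rewrite !mul0r.
by rewrite ler_peMl ?mulr_ge0 ?sqr_ge0 // ler1n.
Qed.

Lemma enorm_le_mxnorm x : enorm x <= k%:R * `|x|.
Proof.
apply: enorm_le_coord_bound => // i.
rewrite [leRHS]mx_normrE; apply/bigmax_geP; right => /=; exists (0, i) => //.
Qed.

Lemma mxnorm_le_enorm x : `|x| <= enorm x.
Proof.
rewrite [leLHS]mx_normrE; apply: bigmax_le; first exact: enorm_ge0.
by move=> [i j] _ /=; rewrite (ord1 i); exact: coord_le_enorm.
Qed.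

Lemma sphere_normalize x : x != 0 -> sphere ((enorm x)^-1 *: x).
Proof.
move=> xn0; rewrite /sphere /= enormZ ger0_norm ?invr_ge0 ?enorm_ge0 //.
by rewrite mulVf // gt_eqF // enorm_gt0.
Qed.

Lemma enorm_normalizeB x y : 0 < enorm x -> 0 < enorm y ->
  enorm ((enorm x)^-1 *: x - (enorm y)^-1 *: y) <= 2%:R * enorm (x - y) / enorm y.
Proof.
move=> xp yp.
have -> : (enorm x)^-1 *: x - (enorm y)^-1 *: y
   = (enorm y)^-1 *: (x - y) + ((enorm x)^-1 - (enorm y)^-1) *: x.
  by apply/rowP => i; rewrite !mxE; ring.
apply: le_trans (enormD_le _ _) _.
rewrite !enormZ ger0_norm ?invr_ge0 ?enorm_ge0 //.
set a := enorm x; set b := enorm y; set d := enorm (x - y).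
have -> : `|a^-1 - b^-1| * a = `|a - b| / b.
  have -> : a^-1 - b^-1 = (b - a) / (a * b) by field; rewrite !gt_eqF.
  rewrite normrM (ger0_norm (_ : 0 <= (a * b)^-1)) ?invr_ge0 ?mulr_ge0 ?ltW //.
  by rewrite distrC; field; rewrite !gt_eqF.
have : `|a - b| / b <= d / b by rewrite ler_pM2r ?invr_gt0 // enorm_dist_le.
rewrite mulrC -mulrA [d / b]mulrC; lra.
Qed.

Lemma enorm_continuous : continuous (@enorm R k).
Proof.
move=> v; apply/(@cvgrPdist_lt _ _ _ _ (nbhs_filter v)) => e e0.
have e'0 : 0 < e / k.+1%:R by rewrite divr_gt0.
near=> w.
apply: le_lt_trans (enorm_dist_le v w) _.
apply: le_lt_trans (enorm_le_mxnorm _) _.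
apply: le_lt_trans (_ : _ <= k.+1%:R * `|v - w|) _.
  by rewrite ler_wpM2r // ler_nat.
by rewrite mulrC -ltr_pdivlMr //; near: w.
Unshelve. all: by end_near. Qed.

Lemma sphere_compact : compact (@sphere R k).
Proof.
apply: bounded_closed_compact.
  exists 1; split; first exact: num_real.
  by move=> M M1 x sx; apply: le_trans (mxnorm_le_enorm x) _; rewrite sx ltW.
apply: (@preimage_closed _ _ (@enorm R k) [set 1]); last exact: closed_eq.
by move=> x _; exact: enorm_continuous.
Qed.

End Euclid.

Lemma sphere_nonempty (R : realType) m : exists b : 'rV[R]_m.+1, sphere b.
Proof.
have cn0 : (const_mx 1 : 'rV[R]_m.+1) != 0.
  apply/eqP => /(congr1 (fun v : 'rV[R]_m.+1 => v 0 0)); rewrite !mxE.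
  exact/eqP/oner_neq0.
by exists ((enorm (const_mx 1 : 'rV[R]_m.+1))^-1 *: const_mx 1); exact: sphere_normalize.
Qed.

Section OrthogonalAction.
Variables (R : realType) (k : nat).
Implicit Types (x y : 'rV[R]_k) (phi psi : 'M[R]_k).

Lemma dotv_mx x y : dotv x y = (x *m y^T) 0 0.
Proof. by rewrite !mxE; apply: eq_bigr => i _; rewrite mxE. Qed.

Lemma mactD phi x y : mact phi (x + y) = mact phi x + mact phi y.
Proof. by rewrite /mact mulmxDl. Qed.

Lemma mactZ phi (c : R) x : mact phi (c *: x) = c *: mact phi x.
Proof. by rewrite /mact scalemxAl. Qed.

Lemma mact_sum phi m (w : 'I_m -> R) (pts : 'I_m -> 'rV[R]_k) :
  mact phi (\sum_(i < m) w i *: pts i) = \sum_(i < m) w i *: mact phi (pts i).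
Proof. by rewrite /mact mulmx_suml; apply: eq_bigr => i _; rewrite scalemxAl. Qed.

Lemma mactM phi psi x : mact phi (mact psi x) = mact (phi *m psi) x.
Proof. by rewrite /mact trmx_mul mulmxA. Qed.

Lemma mact1 x : mact 1%:M x = x.
Proof. by rewrite /mact trmx1 mulmx1. Qed.

Section Orthogonal.
Variable phi : 'M[R]_k.
Hypothesis phiO : Defs.is_orthogonal phi.

Lemma mact_mulmx x : mact phi (x *m phi) = x.
Proof. by rewrite /mact -mulmxA phiO mulmx1. Qed.

Lemma mactK : cancel (mact phi) (mulmx^~ phi).
Proof. by move=> x; rewrite /mact -mulmxA (mulmx1C phiO) mulmx1. Qed.

Lemma mact_inj : injective (mact phi).
Proof. exact: can_inj mactK. Qed.

Lemma dotv_mact x y : dotv (mact phi x) (mact phi y) = dotv x y.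
Proof.
rewrite !dotv_mx /mact trmx_mul trmxK mulmxA -[x *m phi^T *m phi]mulmxA.
by rewrite (mulmx1C phiO) mulmx1.
Qed.

Lemma enorm_mact x : enorm (mact phi x) = enorm x.
Proof. by rewrite /enorm dotv_mact. Qed.

Lemma enorm_mulmx x : enorm (x *m phi) = enorm x.
Proof. by rewrite -[in RHS](mact_mulmx x) enorm_mact. Qed.

End Orthogonal.
End OrthogonalAction.

Section NonnegIntegral.
Local Open Scope ereal_scope.
Context d (T : measurableType d) (R : realType).
Variable mu : {measure set T -> \bar R}.
Import HBNNSimple.

(* No measurability is needed: the integral of a nonnegative function is the
   supremum of the integrals of its simple minorants. *)
Lemma le_integral_nonneg (f g : T -> \bar R) : (forall x, 0 <= f x) ->
  (forall x, f x <= g x) -> \int[mu]_x f x <= \int[mu]_x g x.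
Proof.
move=> f0 fg; have g0 x : 0 <= g x by exact: le_trans (f0 x) (fg x).
rewrite !ge0_integralTE //; apply: le_ereal_sup => _ [h /= hf <-].
by exists h => // x; exact: le_trans (hf x) (fg x).
Qed.

Lemma integralZ_le (c : R) (f : T -> \bar R) : (0 <= c)%R -> (forall x, 0 <= f x) ->
  \int[mu]_x (c%:E * f x) <= c%:E * \int[mu]_x f x.
Proof.
move=> c0 f0; have [->|cn0] := eqVneq c 0%R.
  by rewrite mul0e; under eq_integral do rewrite mul0e; rewrite integral0.
have cp : (0 < c)%R by rewrite lt_neqAle eq_sym cn0 c0.
have cf0 x : 0 <= c%:E * f x by rewrite mule_ge0 // lee_fin.
rewrite !ge0_integralTE //; apply: ge_ereal_sup => _ [h /= hf <-].
have ci0 : (0 <= c^-1)%R by rewrite invr_ge0.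
pose h' := scale_nnsfun h ci0.
have -> : sintegral mu h = c%:E * sintegral mu h'.
  by rewrite sintegralrM muleA -EFinM mulfV ?mul1e // gt_eqF.
rewrite lee_pmul2l ?lte_fin //; apply: ereal_sup_ubound; exists h' => //= x.
have := hf x; have := f0 x; rewrite /h' /=.
case: (f x) => [r| |] //= _; last by rewrite leey.
by rewrite -EFinM !lee_fin ler_pdivrMl.
Qed.

End NonnegIntegral.

Section Cube.
Variable R : realType.

Definition cube k (a : 'rV[R]_k) (s : R) : set 'rV[R]_k :=
  [set x | forall i, (a 0 i <= x 0 i <= a 0 i + s)%R].

Lemma cube_row_mx k (a : 'rV[R]_(1 + k)) s t (y : 'rV[R]_k) :
  cube a s (row_mx (const_mx t : 'rV[R]_1) y) <->
  (a 0 (lshift k ord0) <= t <= a 0 (lshift k ord0) + s)%R /\ cube (rsubmx a) s y.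
Proof.
split => [ay|[ta ay] i].
  split; first by have := ay (lshift k ord0); rewrite row_mxEl mxE.
  by move=> j; have := ay (rshift 1 j); rewrite row_mxEr mxE.
case: (split_ordP i) => j ->; last by rewrite row_mxEr; move: (ay j); rewrite mxE.
by rewrite row_mxEl mxE (ord1 j).
Qed.

Lemma indic_cube_row_mx k (a : 'rV[R]_(1 + k)) s t (y : 'rV[R]_k) :
  let l := a 0 (lshift k ord0) in
  \1_(cube a s) (row_mx (const_mx t : 'rV[R]_1) y)
  = \1_(`[l, l + s]%classic) t * \1_(cube (rsubmx a) s) y :> R.
Proof.
move=> l; have /propext := cube_row_mx a s t y; rewrite !indicE /l.
case: (pselect (cube (rsubmx a) s y)) => ay; last first.
  by rewrite (memNset ay) mulr0 => E; rewrite memNset // E => -[].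
rewrite (mem_set ay) mulr1 => E.
case: (pselect (`[l, l + s]%classic t)) => lt.
  by rewrite !mem_set // E; split => //; move: lt => /=; rewrite in_itv.
by rewrite !memNset // E => -[lt' _]; apply: lt => /=; rewrite in_itv.
Qed.

End Cube.

Section IteratedIntegral.
Variable R : realType.
Local Open Scope ereal_scope.

Lemma iint_ge0 k (g : 'rV[R]_k -> \bar R) : (forall x, 0 <= g x) -> 0 <= iint g.
Proof.
elim: k g => [|k IH] g g0 /=; first exact: g0.
by apply: integral_ge0 => t _; apply: IH => y; apply: g0.
Qed.

Lemma le_iint k (g1 g2 : 'rV[R]_k -> \bar R) : (forall x, 0 <= g1 x) ->
  (forall x, g1 x <= g2 x) -> iint g1 <= iint g2.
Proof.
elim: k g1 g2 => [|k IH] g1 g2 g0 g12 /=; first exact: g12.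
apply: le_integral_nonneg => t; first by apply: iint_ge0 => y; apply: g0.
by apply: IH => y; [apply: g0 | apply: g12].
Qed.

Lemma iintZ_le k (c : R) (g : 'rV[R]_k -> \bar R) : (0 <= c)%R ->
  (forall x, 0 <= g x) -> iint (fun x => c%:E * g x) <= c%:E * iint g.
Proof.
elim: k g => [|k IH] g c0 g0 //=.
apply: le_trans (integralZ_le _ c0 _); last by move=> t; apply: iint_ge0.
apply: le_integral_nonneg => t; last exact: IH.
by apply: iint_ge0 => y; rewrite mule_ge0 // lee_fin.
Qed.

Lemma iint_cube k (a : 'rV[R]_k) (s C : R) : (0 < s)%R -> (0 <= C)%R ->
  iint (fun x => (C * \1_(cube a s) x)%:E) = (C * s ^+ k)%:E.
Proof.
elim: k a C => [|k IH] a C s0 C0 /=.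
  by rewrite indicE mem_set ?expr0 // => -[].
pose a' : 'rV[R]_(1 + k) := a; set l := (a' 0 (lshift k ord0))%R.
transitivity (\int[lebesgue_measure]_t
    ((C * s ^+ k) * \1_(`[l, l + s]%classic) t)%:E).
  apply: eq_integral => t _.
  have Ct0 : (0 <= C * \1_(`[l, l + s]%classic) t)%R.
    by rewrite mulr_ge0 // indicE ler0n.
  rewrite mulrAC -(IH (rsubmx a')) //; congr iint; apply: funext => y; congr EFin.
  by rewrite -mulrA -indic_cube_row_mx.
under eq_integral do rewrite EFinM.
rewrite ge0_integralZl_EFin //; last 2 first.
- exact/measurable_realfun.measurable_EFinP/measurable_realfun.measurable_indic.
- by rewrite mulr_ge0 // exprn_ge0 // ltW.
rewrite integral_indic // setIT.
have /= := @lebesgue_measure_itv R `[l, l + s]%R.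
rewrite lte_fin ltrDl s0 -EFinB addrAC subrr add0r => ->.
by rewrite -EFinM exprSr mulrA.
Qed.

End IteratedIntegral.

Section SphereIntegral.
Variables (R : realType) (k : nat).
Implicit Types (x u : 'rV[R]_k) (F : 'rV[R]_k -> \bar R).

Definition sph_integrand F x : \bar R :=
  if (x != 0) && (enorm x <= 1) then F ((enorm x)^-1 *: x) else 0%E.

Lemma sph_intE F : sph_int F = (k%:R%:E * iint (sph_integrand F))%E.
Proof. by []. Qed.

Lemma sph_integrand_ge0 F : (forall u, sphere u -> (0 <= F u)%E) ->
  forall x, (0 <= sph_integrand F x)%E.
Proof.
move=> F0 x; rewrite /sph_integrand; case: ifP => // /andP[xn0 _].
exact/F0/sphere_normalize.
Qed.

Lemma sph_int_le_scale F1 F2 (c : R) : 0 <= c ->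
  (forall u, sphere u -> (0 <= F2 u)%E) ->
  (forall u, sphere u -> (0 <= F1 u <= c%:E * F2 u)%E) ->
  (sph_int F1 <= c%:E * sph_int F2)%E.
Proof.
move=> c0 F20 F12.
have F10 u : sphere u -> (0 <= F1 u)%E by move/F12 => /andP[].
rewrite !sph_intE muleCA lee_wpmul2l ?lee_fin ?ler0n //.
apply: le_trans (iintZ_le c0 (sph_integrand_ge0 F20)).
apply: le_iint => [|x]; first exact: sph_integrand_ge0.
rewrite /sph_integrand; case: ifP => [/andP[xn0 _]|_]; last by rewrite mule0.
by have /andP[] := F12 _ (sphere_normalize xn0).
Qed.

Lemma sph_int_le_const F (c : R) : 0 <= c ->
  (forall u, sphere u -> (0 <= F u <= c%:E)%E) ->
  (sph_int F <= (k%:R * (c * 2%:R ^+ k))%:E)%E.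
Proof.
move=> c0 Fc.
have F0 u : sphere u -> (0 <= F u)%E by move/Fc => /andP[].
rewrite sph_intE EFinM lee_wpmul2l ?lee_fin ?ler0n //.
rewrite -(iint_cube (const_mx (-1)) (_ : 0 < 2%:R) c0) //.
apply: le_iint => [|x]; first exact: sph_integrand_ge0.
rewrite /sph_integrand; case: ifP => [/andP[xn0 x1]|_]; last first.
  by rewrite lee_fin mulr_ge0 // indicE ler0n.
rewrite indicE mem_set ?mulr1; first by have /andP[] := Fc _ (sphere_normalize xn0).
move=> i; rewrite mxE; have := le_trans (coord_le_enorm x i) x1.
by rewrite ler_norml => /andP[? ?]; apply/andP; split; lra.
Qed.

Definition cap_side (eta : R) := 2%:R * (Num.min (4%:R^-1) (eta / 8%:R) / k%:R).

Lemma cap_side_gt0 eta : (0 < k)%N -> 0 < eta -> 0 < cap_side eta.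
Proof.
move=> k0 eta0; rewrite /cap_side mulr_gt0 // divr_gt0 ?ltr0n //.
by rewrite lt_min invr_gt0 ltr0n divr_gt0 ?ltr0n.
Qed.

Lemma cube_sub_cap x0 eta : (0 < k)%N -> sphere x0 -> 0 < eta -> forall x,
  cube (2%:R^-1 *: x0 - const_mx (cap_side eta / 2%:R)) (cap_side eta) x ->
  [/\ x != 0, enorm x <= 1 & enorm ((enorm x)^-1 *: x - x0) < eta].
Proof.
move=> k0 x0S eta0 x xc; set mu := Num.min (4%:R^-1) (eta / 8%:R).
have mu0 : 0 < mu by rewrite lt_min invr_gt0 ltr0n divr_gt0 ?ltr0n.
have mu1 : mu <= 4%:R^-1 by rewrite ge_min lexx.
have mu2 : mu <= eta / 8%:R by rewrite ge_min lexx orbT.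
set y := 2%:R^-1 *: x0.
have yE : enorm y = 2%:R^-1 by rewrite enormZ x0S mulr1 ger0_norm // invr_ge0.
have xy : enorm (x - y) <= mu.
  have -> : mu = k%:R * (cap_side eta / 2%:R).
    by rewrite /cap_side -/mu; field; rewrite pnatr_eq0 -lt0n.
  apply: enorm_le_coord_bound => [|i].
    by rewrite divr_ge0 ?ler0n // ltW ?cap_side_gt0.
  by have := xc i; rewrite !mxE ler_norml => /andP[? ?]; apply/andP; split; lra.
have x1 : enorm x <= 1 by have := enormD_le y (x - y); rewrite addrC subrK yE; lra.
have x4 : 4%:R^-1 <= enorm x.
  by have := lerB_enorm y x; rewrite -(opprB x y) enormN yE; lra.
have xp : 0 < enorm x by apply: lt_le_trans x4; rewrite invr_gt0 ltr0n.
have xn0 : x != 0 by apply: contraTneq xp => ->; rewrite enorm0 ltxx.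
split => //.
have -> : x0 = (enorm y)^-1 *: y by rewrite yE invrK /y scalerA mulfV ?scale1r.
apply: le_lt_trans (enorm_normalizeB xp _) _; first by rewrite yE invr_gt0 ltr0n.
by rewrite yE invrK; have := enorm_ge0 (x - y); lra.
Qed.

Lemma sph_int_ge_cap F x0 (eta C : R) : (0 < k)%N -> sphere x0 -> 0 < eta -> 0 <= C ->
  (forall u, sphere u -> (0 <= F u)%E) ->
  (forall u, sphere u -> enorm (u - x0) < eta -> (C%:E <= F u)%E) ->
  ((k%:R * (C * cap_side eta ^+ k))%:E <= sph_int F)%E.
Proof.
move=> k0 x0S eta0 C0 F0 FC.
rewrite sph_intE EFinM lee_wpmul2l ?lee_fin ?ler0n //.
set a := 2%:R^-1 *: x0 - const_mx (cap_side eta / 2%:R).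
rewrite -(iint_cube a (cap_side_gt0 k0 eta0) C0).
apply: le_iint => [x|x]; first by rewrite lee_fin mulr_ge0 // indicE ler0n.
rewrite indicE; case: (pselect (cube a (cap_side eta) x)) => [xc|xc]; last first.
  by rewrite memNset // mulr0; exact: sph_integrand_ge0.
have [xn0 x1 xx0] := cube_sub_cap k0 x0S eta0 xc.
by rewrite mem_set // mulr1 /sph_integrand xn0 x1; apply/FC/xx0/sphere_normalize.
Qed.

End SphereIntegral.

Section SupportFunction.
Variables (R : realType) (k : nat).
Implicit Types (x y u v : 'rV[R]_k) (K : set 'rV[R]_k).

Lemma compact_enorm_bounded K : compact K -> exists M, forall y, K y -> enorm y <= M.
Proof.
move=> /compact_bounded[M [_ KM]]; exists (k%:R * (`|M| + 1)) => y Ky.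
apply: le_trans (enorm_le_mxnorm y) _; rewrite ler_wpM2l //.
by apply: KM Ky; apply: le_lt_trans (ler_norm M) _; rewrite ltrDl.
Qed.

Variables (K : set 'rV[R]_k) (M : R).
Hypothesis K0 : K 0.
Hypothesis KM : forall y, K y -> enorm y <= M.

Lemma has_sup_supp x : has_sup [set dotv x y | y in K].
Proof.
split; first by exists (dotv x 0), 0.
exists (enorm x * M) => _ [y Ky <-].
by apply: le_trans (dotv_le_enorm x y) _; rewrite ler_wpM2l ?enorm_ge0 ?KM.
Qed.

Lemma dotv_le_supp_h x y : K y -> dotv x y <= supp_h K x.
Proof. by move=> Ky; apply: sup_upper_bound; [exact: has_sup_supp | exists y]. Qed.

Lemma supp_h_le x c : (forall y, K y -> dotv x y <= c) -> supp_h K x <= c.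
Proof.
move=> xc; apply: ge_sup; first by exists (dotv x 0), 0.
by move=> _ [y Ky <-]; apply: xc.
Qed.

Lemma supp_h_ge0 x : 0 <= supp_h K x.
Proof. by have := dotv_le_supp_h x K0; rewrite dotv0r. Qed.

Lemma supp_h_lipschitz u v : supp_h K u <= supp_h K v + M * enorm (u - v).
Proof.
apply: supp_h_le => y Ky.
have -> : dotv u y = dotv v y + dotv (u - v) y by rewrite dotvBl addrC subrK.
apply: lerD; first exact: dotv_le_supp_h.
by apply: le_trans (dotv_le_enorm _ _) _; rewrite mulrC ler_wpM2r ?enorm_ge0 ?KM.
Qed.

End SupportFunction.

Section ConvexCombination.
Variable R : realDomainType.

Lemma convex_comb_ge (I : eqType) (r : seq I) (w a : I -> R) (t : R) :
  (forall i, 0 <= w i) -> \sum_(i <- r) w i = 1 ->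
  t <= \sum_(i <- r) w i * a i -> exists2 i, i \in r & t <= a i.
Proof.
move=> w0 w1 ta; apply: contrapT => nex.
have at_ i : i \in r -> 0 <= w i * (t - a i).
  move=> ir; rewrite mulr_ge0 // subr_ge0 leNgt; apply/negP => ti.
  by apply: nex; exists i => //; exact: ltW.
have : \sum_(i <- r) w i * (t - a i) == 0.
  rewrite eq_le big_seq sumr_ge0 // andbT -big_seq.
  under eq_bigr do rewrite mulrBr.
  by rewrite sumrB -mulr_suml w1 mul1r subr_le0.
rewrite big_seq psumr_eq0 // => /allP w_eq0.
move: w1; rewrite big_seq big1 => [/esym/eqP|i ir]; first by rewrite oner_eq0.
have /implyP/(_ ir) := w_eq0 i ir; rewrite mulf_eq0 subr_eq0 => /orP[/eqP //|/eqP ti].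
by exfalso; apply: nex; exists i => //; rewrite ti.
Qed.

End ConvexCombination.

Section Interior.
Variables (R : realType) (m : nat).
Local Notation V := 'rV[R]_m.+1.

Lemma interior_enorm_ball (A : set V) c : interior A c ->
  exists2 r, 0 < r & forall w, enorm w < r -> A (c + w).
Proof.
move=> /nbhs_ballP[r r0 cA]; exists r => // w wr; apply: cA.
rewrite -ball_normE /ball_ /= opprD addrA subrr add0r normrN.
exact: le_lt_trans (mxnorm_le_enorm w) wr.
Qed.

Lemma not_interior_set1 (b c : V) : ~ interior [set b] c.
Proof.
move=> /interior_enorm_ball[r r0 cb].
set t := r / 2%:R / m.+1%:R; have t0 : 0 < t by rewrite !divr_gt0.
have cE : c = b by have := cb 0; rewrite enorm0 addr0; apply.
have : enorm (const_mx t : V) < r.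
  apply: le_lt_trans (enorm_le_coord_bound (ltW t0) _) _ => [i|].
    by rewrite mxE ger0_norm // ltW.
  by rewrite /t mulrC divfK ?pnatr_eq0 // ltr_pdivrMr // ltr_pMr ?ltr1n.
move=> /cb; rewrite cE => /(congr1 (fun v : V => v 0 0)); rewrite !mxE.
by move: t0; lra.
Qed.

Lemma convhull_set1 (b z : V) : convhull [set b] z -> z = b.
Proof.
move=> [p [w [pts [_ w1 ptsb ->]]]].
under eq_bigr => i _ do rewrite (ptsb i).
by rewrite -scaler_suml w1 scale1r.
Qed.

End Interior.

Section Orbits.
Variables (R : realType) (m : nat).
Local Notation V := 'rV[R]_m.+1.
Variable S : set 'M[R]_m.+1.
Hypothesis HS : discrete_subgroup_O S.
Hypothesis Hspan : spanning S.

Let S1 : S 1%:M. Proof. by case: HS. Qed.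
Let SM a b : S a -> S b -> S (a *m b). Proof. by case: HS => _ SM _ _ _; exact: SM. Qed.
Let SO a : S a -> Defs.is_orthogonal a. Proof. by case: HS => _ _ _ SO _; exact: SO. Qed.

Definition S_orbit (a : V) := [set mact phi a | phi in S].

Lemma S_orbit_refl a : S_orbit a a.
Proof. by exists 1%:M => //; rewrite mact1. Qed.

Lemma S_orbit_mact psi a z : S psi -> S_orbit a z -> S_orbit a (mact psi z).
Proof.
by move=> Spsi [phi Sphi <-]; exists (psi *m phi); [exact: SM | rewrite mactM].
Qed.

Lemma convhull_S_orbit_mact psi a z : S psi ->
  convhull (S_orbit a) z -> convhull (S_orbit a) (mact psi z).
Proof.
move=> Spsi [p [w [pts [w0 w1 orb_pts ->]]]].
exists p, w, (fun i => mact psi (pts i)); split => //; last by rewrite mact_sum.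
by move=> i; exact: S_orbit_mact.
Qed.

Lemma S_orbit_enum b : sphere b ->
  exists s : seq V, uniq s /\ forall v, S_orbit b v <-> v \in s.
Proof.
move=> /Hspan[/finite_seqP[s sE] _]; exists (undup s); split; first exact: undup_uniq.
by move=> v; rewrite mem_undup /S_orbit sE.
Qed.

Lemma S_orbit_sum_fixed (s : seq V) b : uniq s -> (forall v, S_orbit b v <-> v \in s) ->
  forall phi, S phi -> mact phi (\sum_(v <- s) v) = \sum_(v <- s) v.
Proof.
move=> us sE phi Sphi.
have inj_phi := mact_inj (SO Sphi).
have : perm_eq (map (mact phi) s) s.
  apply: uniq_perm; rewrite ?map_inj_uniq //.
  apply: (uniq_min_size _ _ _).2; rewrite ?map_inj_uniq ?size_map //.
  by move=> _ /mapP[v vs ->]; apply/sE/S_orbit_mact/sE.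
by move=> pe; rewrite -[RHS](perm_big _ pe) big_map /mact mulmx_suml.
Qed.

(* A nonzero fixed vector would have a one-point orbit, whose hull has empty interior. *)
Lemma S_fixed_eq0 (z : V) : (forall phi, S phi -> mact phi z = z) -> z = 0.
Proof.
move=> zfix; apply: contrapT => /eqP zn0.
set b := (enorm z)^-1 *: z.
have [_ [c cint]] := Hspan (sphere_normalize zn0).
have orb_b : S_orbit b = [set b].
  apply/seteqP; split => [_ [phi Sphi <-] | _ ->]; last exact: S_orbit_refl.
  by rewrite /= /b mactZ zfix.
have : interior (convhull (S_orbit b)) c by [].
rewrite orb_b => int1; apply: (@not_interior_set1 _ _ b c).
by apply: filterS int1 => y /convhull_set1 ->.
Qed.

Lemma S_orbit_dotv_ge0 b x : sphere b -> exists2 psi, S psi & 0 <= dotv x (mact psi b).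
Proof.
move=> bS; have [s [us sE]] := S_orbit_enum bS.
have sum0 : \sum_(v <- s) dotv x v = 0.
  rewrite -[RHS](dotv0r x) -(S_fixed_eq0 (S_orbit_sum_fixed us sE)).
  by elim: s {us sE} => [|v s IH]; rewrite ?big_nil ?dotv0r // !big_cons dotvDr IH.
have s_gt0 : (0 < size s)%N.
  by have := (sE b).1 (S_orbit_refl b); case: s {us sE sum0}.
have [v vs xv] : exists2 v, v \in s & 0 <= dotv x v.
  apply: (@convex_comb_ge _ _ s (fun=> (size s)%:R^-1)).
  - by move=> _; rewrite invr_ge0.
  - rewrite big_const_seq count_predT iter_addr_0 -[_ *+ _]mulr_natr.
    by rewrite mulVf // pnatr_eq0 -lt0n.
  - by rewrite -mulr_sumr sum0 mulr0.
by have [psi Spsi vE] := (sE v).2 vs; exists psi; rewrite ?vE.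
Qed.

Lemma exists_mact_dotv_ge0 x c : exists2 psi, S psi & 0 <= dotv x (mact psi c).
Proof.
have [->|cn0] := eqVneq c 0; first by exists 1%:M; rewrite ?mact1 ?dotv0r.
have [psi Spsi] := S_orbit_dotv_ge0 x (sphere_normalize cn0).
exists psi => //; rewrite -[c](@scalerKV _ _ (enorm c)) ?gt_eqF ?enorm_gt0 //.
by rewrite mactZ dotvZr mulr_ge0 // enorm_ge0.
Qed.

Definition orbit_gap (a : V) d :=
  forall x, sphere x -> exists2 phi, S phi & d <= dotv x (mact phi a).

(* The hull of the orbit of a contains a ball B(c, r), and with it the point
   psi c + (r/2) x for any psi in S; choosing psi with x . psi c >= 0 gives an orbit
   point whose inner product with x is at least r/2. *)
Lemma orbit_gap_exists a : sphere a -> exists2 d, 0 < d & orbit_gap a d.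
Proof.
move=> /Hspan[_ [c /interior_enorm_ball[r r0 cr]]].
exists (r / 2%:R) => [|x xS]; first by rewrite divr_gt0.
have [psi Spsi xc] := exists_mact_dotv_ge0 x c.
have wr : enorm ((r / 2%:R) *: (x *m psi)) < r.
  rewrite enormZ (enorm_mulmx (SO Spsi)) xS mulr1 ger0_norm ?divr_ge0 ?ltW //.
  by rewrite ltr_pdivrMr // ltr_pMr ?ltr1n.
have := convhull_S_orbit_mact Spsi (cr _ wr).
rewrite mactD mactZ (mact_mulmx (SO Spsi)).
move=> [p [w [pts [w0 w1 orb_pts E]]]].
have [|i _ xi] := @convex_comb_ge _ _ (index_enum 'I_p) w (dotv x \o pts) (r / 2%:R)
  w0 w1.
  by rewrite -dotv_sumr -E dotvDr dotvZr -enorm_sqr xS expr1n mulr1 lerDr.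
by have [phi Sphi phi_a] := orb_pts i; exists phi; rewrite ?phi_a.
Qed.

Lemma orbit_gap_le a d d' : orbit_gap a d -> d' <= d -> orbit_gap a d'.
Proof.
move=> gap d'd x xS; have [phi Sphi xa] := gap x xS.
by exists phi => //; exact: le_trans xa.
Qed.

Lemma orbit_gap_near a a' d : orbit_gap a d -> enorm (a' - a) <= d / 2%:R ->
  orbit_gap a' (d / 2%:R).
Proof.
move=> gap a'a x xS; have [phi Sphi xa] := gap x xS; exists phi => //.
rewrite -(subrK a a') mactD dotvDr.
have := dotv_le_enorm x (- mact phi (a' - a)).
by rewrite dotvNr enormN (enorm_mact (SO Sphi)) xS mul1r; lra.
Qed.

Lemma uniform_orbit_gap : exists2 rho, 0 < rho & forall a, sphere a -> orbit_gap a rho.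
Proof.
have /boolp.choice[d dP] : forall a : V, exists da : R,
    sphere a -> 0 < da /\ orbit_gap a da.
  move=> a; case: (pselect (sphere a)) => [/orbit_gap_exists[da ? ?] | naS].
    by exists da.
  by exists 1.
pose rad a := d a / (2%:R * m.+1%:R).
have : cover_compact (@sphere R m.+1) by rewrite -compact_cover; exact: sphere_compact.
case/(_ V (@sphere R m.+1) (fun a => ball a (rad a))) => [a _|a aS|D DS cov].
- exact: ball_open.
- by exists a => //; apply: ballxx; rewrite divr_gt0 ?(dP a aS).1.
exists (\big[Num.min/1]_(a : D) (d (val a) / 2%:R)).
  by apply: lt_bigmin => // a _; rewrite divr_gt0 // (dP _ (set_mem (DS _ (valP a)))).1.
move=> b bS; have [a aD ba] := cov b bS; have [da0 gap] := dP a (set_mem (DS a aD)).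
apply: orbit_gap_le (orbit_gap_near gap _) (bigmin_le _ ([` aD]%fset) _).
have -> : d a / 2%:R = m.+1%:R * rad a by rewrite /rad; field.
apply: le_trans (enorm_le_mxnorm _) _; rewrite ler_wpM2l //.
by move: ba; rewrite -ball_normE /ball_ /= distrC => /ltW.
Qed.

End Orbits.

Section NegativePower.
Variable R : realType.

Lemma powR_le_nonpos (a b p : R) : 0 < a -> a <= b -> p <= 0 -> b `^ p <= a `^ p.
Proof.
move=> a0 ab p0; have b0 : 0 < b by exact: lt_le_trans ab.
by rewrite /powR !gt_eqF // ler_expR ler_wnM2l // ler_ln ?posrE.
Qed.

Lemma powR_lt1_neg (c p : R) : 1 < c -> p < 0 -> c `^ p < 1.
Proof.
move=> c1 p0; rewrite /powR gt_eqF ?(lt_trans ltr01) // -expR0 ltr_expR.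
by rewrite nmulr_rlt0 // ln_gt0.
Qed.

Lemma powR_gt_of_lt (q A p : R) : 0 < q < 1 -> 0 < A -> p < ln A / ln q -> A < q `^ p.
Proof.
move=> /andP[q0 q1] A0 pA; have lnq : ln q < 0 by apply: ln_lt0; rewrite q0 q1.
rewrite /powR gt_eqF // -{1}(lnK (A0 : A \in Num.pos)) ltr_expR.
by move: pA; rewrite -(ltr_nM2r lnq) divfK ?lt_eqF.
Qed.

End NegativePower.

Section MinimumOfSupportFunction.
Variables (R : realType) (m : nat).
Local Notation V := 'rV[R]_m.+1.
Variables (S : set 'M[R]_m.+1) (f : V -> R) (c1 c2 : R).
Hypothesis HS : discrete_subgroup_O S.
Hypothesis Hspan : spanning S.
Hypothesis c1_gt0 : 0 < c1.
Hypothesis c2_gt0 : 0 < c2.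
Hypothesis f_bounds : forall x, sphere x -> c1 <= f x <= c2.

Let f_ge0 x : sphere x -> 0 <= f x.
Proof. by move/f_bounds/andP => [c1f _]; exact: le_trans (ltW c1_gt0) c1f. Qed.

Let Sf := sph_int (fun x : V => (f x)%:E).

Definition cap_ratio eta := c2 * 2%:R ^+ m.+1 / (c1 * cap_side m.+1 eta ^+ m.+1).

Definition Kp_threshold rho eps := ln (cap_ratio (eps * rho / 2%:R)) / ln (1 - eps).

Lemma cap_ratio_gt0 eta : 0 < eta -> 0 < cap_ratio eta.
Proof.
by move=> eta0; rewrite divr_gt0 ?mulr_gt0 ?exprn_gt0 ?cap_side_gt0.
Qed.

Lemma sph_int_f_le : (Sf <= (m.+1%:R * (c2 * 2%:R ^+ m.+1))%:E)%E.
Proof.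
apply: sph_int_le_const (ltW c2_gt0) _ => u uS.
by rewrite !lee_fin f_ge0 //; case/andP: (f_bounds uS).
Qed.

Lemma sph_int_f_fin : exists2 r, 0 < r & Sf = r%:E.
Proof.
have [b bS] := sphere_nonempty R m.
have := sph_int_ge_cap (F := fun x => (f x)%:E) (ltn0Sn m) bS ltr01 (ltW c1_gt0)
  (fun u uS => f_ge0 uS) (fun u uS _ => proj1 (andP (f_bounds uS))).
have := sph_int_f_le; rewrite -/Sf; case: Sf => [r| |] //= _.
rewrite lee_fin => Sf_ge; exists r => //; apply: lt_le_trans Sf_ge.
by rewrite mulr_gt0 ?ltr0n // mulr_gt0 // exprn_gt0 // cap_side_gt0.
Qed.

Section KpBody.
Variables (p : R) (K : set V).
Hypothesis Kp_K : Kp S f p K.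
Hypothesis p_lt0 : p < 0.

Let K0 : K 0. Proof. by case: Kp_K. Qed.

Lemma Kp_supp_h_not_ge c : 1 < c -> ~ (forall u, sphere u -> c <= supp_h K u).
Proof.
move=> c_gt1 cK; have [_ _ _ Kint] := Kp_K; have [r r0 Sf_r] := sph_int_f_fin.
have c0 : 0 < c by exact: lt_trans c_gt1.
have fh_le u : sphere u ->
    (0 <= (f u)%:E * powe (supp_h K u) p <= (c `^ p)%:E * (f u)%:E)%E.
  move=> uS; have hp : 0 < supp_h K u by exact: lt_le_trans (cK u uS).
  rewrite /powe hp -!EFinM !lee_fin mulr_ge0 ?f_ge0 ?powR_ge0 //=.
  by rewrite mulrC ler_wpM2r ?f_ge0 // powR_le_nonpos ?cK // ltW.
have := sph_int_le_scale (F2 := fun x => (f x)%:E) (powR_ge0 c p) (fun u uS => f_ge0 uS)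
  fh_le.
rewrite Kint -/Sf Sf_r -EFinM lee_fin.
have : c `^ p * r < r by rewrite -[ltRHS]mul1r ltr_pM2r // powR_lt1_neg.
lra.
Qed.

Lemma Kp_enorm_le rho : 0 < rho -> (forall a, sphere a -> orbit_gap S a rho) ->
  forall y, K y -> enorm y <= rho^-1.
Proof.
move=> rho0 gap y Ky; rewrite -[rho^-1]mul1r ler_pdivlMr // leNgt; apply/negP => y_gt.
have yn0 : y != 0 by apply: contraTneq y_gt => ->; rewrite enorm0 mul0r ltr10.
have [[Kc _ _] Kinv _ _] := Kp_K; have [M KM] := compact_enorm_bounded Kc.
apply: (Kp_supp_h_not_ge y_gt) => u uS.
have [phi Sphi u_phi] := gap _ (sphere_normalize yn0) u uS.
have Kphi : K (mact phi y) by rewrite -(Kinv phi Sphi); exists y.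
apply: le_trans (dotv_le_supp_h K0 KM u Kphi).
rewrite -[y in mact _ y](@scalerKV _ _ (enorm y)) ?gt_eqF ?enorm_gt0 //.
by rewrite mactZ dotvZr ler_wpM2l // enorm_ge0.
Qed.

Variable rho : R.
Hypothesis rho_gt0 : 0 < rho.
Hypothesis gap : forall a, sphere a -> orbit_gap S a rho.

Let KM := Kp_enorm_le rho_gt0 gap.

Let has_inf_supp_h : has_inf [set supp_h K x | x in @sphere R m.+1].
Proof.
split; first by have [b bS] := sphere_nonempty R m; exists (supp_h K b), b.
by exists 0 => _ [x _ <-]; exact: supp_h_ge0 K0 KM x.
Qed.

Lemma Kp_sph_min_le1 : sph_min (supp_h K) <= 1.
Proof.
rewrite leNgt; apply/negP => min_gt1; apply: (Kp_supp_h_not_ge min_gt1) => u uS.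
by apply: (ge_inf has_inf_supp_h.2); exists u.
Qed.

Lemma Kp_cap_bound x0 eta q : sphere x0 -> 0 < eta -> 0 < q ->
  (forall u, sphere u -> enorm (u - x0) < eta -> supp_h K u <= q) ->
  q `^ p <= cap_ratio eta.
Proof.
move=> x0S eta0 q0 capq; have [_ _ _ Kint] := Kp_K.
have fh_ge0 u : sphere u -> (0 <= (f u)%:E * powe (supp_h K u) p)%E.
  move=> uS; rewrite /powe; case: ifP => _.
    by rewrite -EFinM lee_fin mulr_ge0 ?f_ge0 ?powR_ge0.
  by rewrite mule_ge0 ?leey ?lee_fin ?f_ge0.
have fh_cap u : sphere u -> enorm (u - x0) < eta ->
    ((c1 * q `^ p)%:E <= (f u)%:E * powe (supp_h K u) p)%E.
  move=> uS ux0; have /andP[c1f _] := f_bounds uS; rewrite /powe.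
  case: ifP => [hu_gt0|_]; last first.
    by rewrite gt0_muley ?leey // lte_fin (lt_le_trans c1_gt0).
  by rewrite -EFinM lee_fin ler_pM ?powR_ge0 ?powR_le_nonpos ?capq // ltW.
have := sph_int_ge_cap (ltn0Sn m) x0S eta0 (mulr_ge0 (ltW c1_gt0) (powR_ge0 q p))
  fh_ge0 fh_cap.
rewrite Kint -/Sf => /le_trans/(_ sph_int_f_le); rewrite lee_fin ler_pM2l ?ltr0n //.
have s_gt0 := cap_side_gt0 (ltn0Sn m) eta0.
by rewrite ler_pdivlMr ?mulr_gt0 ?exprn_gt0 // mulrCA mulrA.
Qed.

Lemma Kp_sph_min_gt eps : 0 < eps < 1 -> p < Kp_threshold rho eps ->
  1 - 2%:R * eps < sph_min (supp_h K).
Proof.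
move=> /andP[eps0 eps1] p_lt; set eta := eps * rho / 2%:R.
have eta0 : 0 < eta by rewrite divr_gt0 ?mulr_gt0.
rewrite ltNge; apply/negP => min_le.
have [_ [x0 x0S <-] x0_min] := inf_adherent (divr_gt0 eps0 (ltr0n _ 2)) has_inf_supp_h.
rewrite -/(sph_min _) in x0_min.
have cap_le u : sphere u -> enorm (u - x0) < eta -> supp_h K u <= 1 - eps.
  move=> uS ux0; have := supp_h_lipschitz K0 KM u x0.
  have : rho^-1 * enorm (u - x0) <= eps / 2%:R.
    have -> : eps / 2%:R = rho^-1 * eta by rewrite /eta; field; exact: lt0r_neq0.
    by rewrite ler_wpM2l ?invr_ge0 ?ltW.
  lra.
have q01 : 0 < 1 - eps < 1 by apply/andP; split; lra.
have := Kp_cap_bound x0S eta0 (proj1 (andP q01)) cap_le.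
by apply/negP; rewrite -ltNge; apply: powR_gt_of_lt q01 (cap_ratio_gt0 eta0) p_lt.
Qed.

End KpBody.

Lemma Kp_sph_min_cvg (Om : R -> set V) p0 : p0 <= 0 ->
  (forall p, p < p0 -> Kp S f p (Om p)) ->
  (fun p => sph_min (supp_h (Om p))) @ -oo --> (1 : R).
Proof.
move=> p0_le0 KpOm; have [rho rho0 gap] := uniform_orbit_gap HS Hspan.
apply/cvgrPdist_lt => e e0; set eps := Num.min (e / 4%:R) (2%:R^-1).
have eps0 : 0 < eps by rewrite lt_min invr_gt0 ltr0n divr_gt0.
have eps_e : eps <= e / 4%:R by rewrite ge_min lexx.
have eps1 : eps < 1.
  apply: le_lt_trans (_ : eps <= 2%:R^-1) _; first by rewrite ge_min lexx orbT.
  by rewrite invf_lt1 ?ltr1n.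
exists (Num.min p0 (Kp_threshold rho eps)); split; first exact: num_real.
move=> p; rewrite lt_min => /andP[p_p0 p_lt].
have p_lt0 : p < 0 by exact: lt_le_trans p_p0 p0_le0.
have le1 := Kp_sph_min_le1 (KpOm p p_p0) p_lt0 rho0 gap.
have := Kp_sph_min_gt (KpOm p p_p0) p_lt0 rho0 gap (introT andP (conj eps0 eps1)) p_lt.
by rewrite ger0_norm ?subr_ge0 //; lra.
Qed.

End MinimumOfSupportFunction.

Theorem corollary3p1 (R : realType) (n : nat) (S : set 'M[R]_(n.+1))
    (f : 'rV[R]_(n.+1) -> R) (c1 c2 : R) (Om : R -> set 'rV[R]_(n.+1)) :
  (1 <= n)%N ->
  discrete_subgroup_O S ->
  spanning S ->
  S_invariant_fun S f ->
  sphere_measurable f ->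
  0 < c1 -> 0 < c2 ->
  (forall x, sphere x -> c1 <= f x <= c2) ->
  (forall p : R, p < - (n.+1)%:R -> V_maximizer S f p (Om p)) ->
  (fun p : R => sph_min (supp_h (Om p))) @ -oo --> (1 : R).
Proof.
move=> _ HS Hspan _ _ c1_gt0 c2_gt0 f_bounds maxOm.
apply: (Kp_sph_min_cvg HS Hspan c1_gt0 c2_gt0 f_bounds (p0 := - (n.+1)%:R)).
  by rewrite oppr_le0.
by move=> p /maxOm[].
Qed.
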